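(* Let $n\ge1$ and $s\ge1$ be integers and let $\mathcal{E}$ be a nonempty subset of $\{1,\dots,s\}$ (the parity-check equation of an $(n,n-1)$ convolutional code), represented by the binary vector $b_1\dots b_s$ with $b_i=1$ iff $i\in\mathcal{E}$. For a finite set $\mathcal{F}$ of integers write $\tilde{\mathcal{G}}^{\mathcal{F}}_2$ for the labelled neighbourhood graph at distance two of $\mathcal{F}$ (defined in the context). Then: (1) if $\mathcal{E}'$ is the set represented by the reversed vector $b_s\dots b_1$ (i.e. $\mathcal{E}'=\{s+1-e: e\in\mathcal{E}\}$), the labelled graphs $\tilde{\mathcal{G}}^{\mathcal{E}'}_2$ and $\tilde{\mathcal{G}}^{\mathcal{E}}_2$ are equivalent; (2) if moreover $s$ is a multiple of $n$, then for every permutation $p$ of $\{1,\dots,n\}$, if $\mathcal{E}'$ is the set represented by the vector $p(b_1\dots b_n)\,p(b_{n+1}\dots b_{2n})\cdots p(b_{s-n+1}\dots b_s)$, obtained by applying the same permutation $p$ to the coordinates inside each consecutive block of length $n$, then $\tilde{\mathcal{G}}^{\mathcal{E}'}_2$ and $\tilde{\mathcal{G}}^{\mathcal{E}}_2$ are equivalent.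
   Context: For a finite set $\mathcal{F}$ of integers and $i\in\mathbb{Z}$ let $\mathcal{F}^{(i)}=\{f+in: f\in\mathcal{F}\}$. The labelled graph of a set $\mathcal{L}$ of such sets has one vertex per element of $\mathcal{L}$, and for two distinct elements $\mathcal{A},\mathcal{B}$ and each position $p\in\mathcal{A}\cap\mathcal{B}$ there is an edge between them labelled $p$. Take $\mathcal{L}=\{\mathcal{F}^{(i)}:i\in\mathbb{Z}\}$; let $V_1$ be the vertices $\mathcal{F}^{(i)}$ with $\mathcal{F}^{(i)}\cap\mathcal{F}\neq\emptyset$ (including $\mathcal{F}$), and let $\tilde{\mathcal{G}}^{\mathcal{F}}_2$ be the labelled subgraph induced by $V_1$ together with all vertices having an edge to a vertex of $V_1$. Two graphs are isomorphic if there is a bijection $\phi$ between their vertex sets such that every pair $(x,y)$ has as many edges between $x,y$ as between $\phi(x),\phi(y)$. Two labelled graphs are equivalent if they are isomorphic via some $\phi$ and there is a bijection $\psi$ from the labels of the first to the labels of the second such that for every pair of vertices $(x,y)$, if the multiset of labels of edges between $x$ and $y$ is $\{a_1,\dots,a_k\}$, then the multiset of labels of edges between $\phi(x)$ and $\phi(y)$ is $\{\psi(a_1),\dots,\psi(a_k)\}$. *)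

From mathcomp Require Import all_boot all_fingroup all_algebra.
From mathcomp Require Import finmap.
Set Implicit Arguments. Unset Strict Implicit. Unset Printing Implicit Defensive.
Import GRing.Theory Num.Theory.
Local Open Scope fset_scope.
Local Open Scope ring_scope.

(* A labelled graph is given by a vertex predicate V on a type T and, for every
   pair of vertices (x,y), the multiset (as a seq) of labels of the edges
   between x and y. *)

Definition labset (T : Type) (L : eqType) (V : T -> Prop) (m : T -> T -> seq L) (a : L) : Prop :=
  exists x y, V x /\ V y /\ a \in m x y.

Definition bij_on (A B : Type) (P : A -> Prop) (Q : B -> Prop) (f : A -> B) : Prop :=
  (forall x, P x -> Q (f x)) /\
  (forall x y, P x -> P y -> f x = f y -> x = y) /\
  (forall y, Q y -> exists x, P x /\ f x = y).

Definition lgraph_equiv (T1 T2 : Type) (L1 L2 : eqType)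
  (V1 : T1 -> Prop) (m1 : T1 -> T1 -> seq L1)
  (V2 : T2 -> Prop) (m2 : T2 -> T2 -> seq L2) : Prop :=
  exists (phi : T1 -> T2) (psi : L1 -> L2),
    bij_on V1 V2 phi /\
    bij_on (labset V1 m1) (labset V2 m2) psi /\
    (forall x y, V1 x -> V1 y -> size (m1 x y) = size (m2 (phi x) (phi y))) /\
    (forall x y, V1 x -> V1 y -> perm_eq (map psi (m1 x y)) (m2 (phi x) (phi y))).

Definition shiftF (n : nat) (F : {fset int}) (i : int) : {fset int} :=
  [fset f + i * n%:Z | f in F].

Definition inL (n : nat) (F : {fset int}) (A : {fset int}) : Prop :=
  exists i : int, A = shiftF n F i.

Definition edge_labels (A B : {fset int}) : seq int :=
  if A != B then enum_fset (A `&` B) else [::].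

Definition has_edge (A B : {fset int}) : Prop := edge_labels A B <> [::].

Definition V1set (n : nat) (F : {fset int}) (A : {fset int}) : Prop :=
  inL n F A /\ A `&` F != fset0.

Definition G2vert (n : nat) (F : {fset int}) (A : {fset int}) : Prop :=
  inL n F A /\ (V1set n F A \/ exists B, V1set n F B /\ has_edge A B).

Definition G2_equiv (n : nat) (F F' : {fset int}) : Prop :=
  lgraph_equiv (G2vert n F) edge_labels (G2vert n F') edge_labels.

Definition revE (s : nat) (E : {fset int}) : {fset int} :=
  [fset (s.+1)%:Z - e | e in E].

(* apply the permutation p of 'I_n to each block of length n:
   position e = k n + j + 1 (0 <= j < n) goes to k n + p(j) + 1 *)
Definition blockperm_pos (n : nat) (p : {perm 'I_n}) (e : int) : int :=
  let m := `|e - 1|%N in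
  let j := (m %% n)%N in
  let pj := odflt j (omap (fun o : 'I_n => nat_of_ord (p o)) (insub j)) in
  ((m %/ n * n + pj).+1)%:Z.

Definition blockpermE (n : nat) (p : {perm 'I_n}) (E : {fset int}) : {fset int} :=
  [fset blockperm_pos p e | e in E].

From mathcomp Require Import all_boot all_fingroup all_algebra.
From mathcomp Require Import finmap.
From mathcomp Require Import ring.
Set Implicit Arguments. Unset Strict Implicit. Unset Printing Implicit Defensive.
Import GRing.Theory Num.Theory.
Local Open Scope fset_scope.
Local Open Scope ring_scope.

(* Both transformations are images under a bijection k of the integers with
   k (x + i n) = k x + c i n for a fixed unit c (c = -1 for the reversal,
   c = 1 for the block permutation).  Taking images under k maps the shifts
   F^(i) of F onto the shifts of k(F), commutes with intersections, and so
   transports the vertices, the edges and their labels of the graph of F onto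
   those of k(F); the labels are relabelled by k itself. *)

Lemma bij_on_can (A B : Type) (P : A -> Prop) (Q : B -> Prop) (f : A -> B) (g : B -> A) :
  (forall x, P x -> Q (f x)) -> (forall y, Q y -> P (g y)) ->
  cancel f g -> cancel g f -> bij_on P Q f.
Proof.
move=> PQ QP fK gK; split=> //; split; first by move=> x y _ _; apply: (can_inj fK).
by move=> y Qy; exists (g y); split; [apply: QP | apply: gK].
Qed.

Section ImfsetCancel.
Variables k h : int -> int.
Hypotheses (kK : cancel k h) (hK : cancel h k).

Lemma imfsetK (A : {fset int}) : h @` (k @` A) = A.
Proof.
rewrite -imfset_comp -[RHS]imfset_id; apply: eq_in_imfset => x _ /=; exact: kK.
Qed.

Lemma imfset_can_inj : injective (fun A : {fset int} => k @` A).
Proof. by move=> A B eAB; rewrite -[A]imfsetK -[B]imfsetK /= eAB. Qed.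

Lemma mem_imfset_can (A : {fset int}) x : (x \in k @` A) = (h x \in A).
Proof. by rewrite -{1}(hK x) mem_imfset //; apply: (can_inj kK). Qed.

Lemma imfsetI_can (A B : {fset int}) : k @` (A `&` B) = k @` A `&` k @` B.
Proof. by apply: imfsetI => x y _ _; apply: (can_inj kK). Qed.

Lemma edge_labels_imfset (A B : {fset int}) :
  perm_eq (map k (edge_labels A B)) (edge_labels (k @` A) (k @` B)).
Proof.
rewrite /edge_labels (inj_eq imfset_can_inj); case: eqVneq => // _.
apply: uniq_perm => [||x]; first by rewrite (map_inj_uniq (can_inj kK)) fset_uniq.
  exact: fset_uniq.
by rewrite -{1}(hK x) (mem_map (can_inj kK)) -imfsetI_can mem_imfset_can.
Qed.

Lemma has_edge_imfset (A B : {fset int}) : has_edge A B -> has_edge (k @` A) (k @` B).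
Proof.
move=> eAB /(congr1 size); rewrite -(perm_size (edge_labels_imfset A B)) size_map.
by move/size0nil.
Qed.

End ImfsetCancel.

Section ShiftEquivariant.
Variables (n : nat) (k h : int -> int) (c : int).
Hypotheses (kK : cancel k h) (hK : cancel h k).
Hypothesis k_shift : forall x i, k (x + i * n%:Z) = k x + (c * i) * n%:Z.

Lemma shiftF_imfset F i : k @` shiftF n F i = shiftF n (k @` F) (c * i).
Proof. by rewrite /shiftF -!imfset_comp; apply: eq_imfset => // x /=; rewrite k_shift. Qed.

Lemma inL_imfset F A : inL n F A -> inL n (k @` F) (k @` A).
Proof. by case=> i ->; exists (c * i); rewrite shiftF_imfset. Qed.

Lemma V1set_imfset F A : V1set n F A -> V1set n (k @` F) (k @` A).
Proof.
case=> LA AF; split; first exact: inL_imfset.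
by rewrite -(imfsetI_can kK) -(imfset0 k) (inj_eq (imfset_can_inj kK)).
Qed.

Lemma G2vert_imfset F A : G2vert n F A -> G2vert n (k @` F) (k @` A).
Proof.
case=> LA [V1A | [B [V1B eAB]]]; split; try exact: inL_imfset.
  by left; apply: V1set_imfset.
by right; exists (k @` B); split; [apply: V1set_imfset | apply: has_edge_imfset].
Qed.

Lemma labset_imfset F a :
  labset (G2vert n F) edge_labels a -> labset (G2vert n (k @` F)) edge_labels (k a).
Proof.
case=> [A [B [GA [GB aAB]]]]; exists (k @` A), (k @` B).
split; [exact: G2vert_imfset | split; first exact: G2vert_imfset].
by rewrite -(perm_mem (edge_labels_imfset kK hK A B)) map_f.
Qed.

End ShiftEquivariant.

Lemma G2_equiv_imfset (n : nat) (k h : int -> int) (c : int) (F : {fset int}) :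
  cancel k h -> cancel h k -> c * c = 1 ->
  (forall x i, k (x + i * n%:Z) = k x + (c * i) * n%:Z) ->
  G2_equiv n (k @` F) F.
Proof.
move=> kK hK c2 k_shift.
have h_shift x i : h (x + i * n%:Z) = h x + (c * i) * n%:Z.
  by apply: (can_inj kK); rewrite k_shift !hK mulrA c2 mul1r.
exists (fun A => h @` A), h; split; last split; last split.
- apply: (bij_on_can (g := fun A => k @` A) _ _ (imfsetK hK) (imfsetK kK)).
    by move=> A /(G2vert_imfset hK kK h_shift); rewrite imfsetK.
  exact: (G2vert_imfset kK hK k_shift).
- apply: (bij_on_can (g := k) _ _ hK kK); last exact: (labset_imfset kK hK k_shift).
  by move=> a /(labset_imfset hK kK h_shift); rewrite imfsetK.
- by move=> A B _ _; rewrite -(perm_size (edge_labels_imfset hK kK A B)) size_map.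
- by move=> A B _ _; apply: edge_labels_imfset.
Qed.

Section BlockPermutation.
Variable n : nat.
Hypothesis n_gt0 : (0 < n)%N.

Definition perm_nat (q : {perm 'I_n}) (j : nat) : nat :=
  odflt j (omap (fun o : 'I_n => nat_of_ord (q o)) (insub j)).

Lemma perm_natE q j (lt_jn : (j < n)%N) : perm_nat q j = q (Ordinal lt_jn).
Proof. by rewrite /perm_nat insubT. Qed.

Lemma perm_nat_lt q j : (j < n)%N -> (perm_nat q j < n)%N.
Proof. by move=> lt_jn; rewrite (perm_natE q lt_jn). Qed.

Lemma perm_natK q j : (j < n)%N -> perm_nat q^-1 (perm_nat q j) = j.
Proof. by move=> lt_jn; rewrite (perm_natE q lt_jn) /perm_nat valK /= permK. Qed.

Definition block_offset (x : int) : nat := `|((x - 1) %% n%:Z)%Z|%N.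

Definition blockperm_int (q : {perm 'I_n}) (x : int) : int :=
  ((x - 1) %/ n%:Z)%Z * n%:Z + (perm_nat q (block_offset x))%:Z + 1.

Lemma n_neq0 : n%:Z != 0. Proof. by rewrite eqz_nat -lt0n. Qed.

Lemma block_offsetE x : (block_offset x)%:Z = ((x - 1) %% n%:Z)%Z.
Proof. by rewrite gez0_abs // modz_ge0 // n_neq0. Qed.

Lemma block_offset_lt x : (block_offset x < n)%N.
Proof. by rewrite -ltz_nat block_offsetE ltz_pmod // ltz_nat. Qed.

Lemma divzMDl_small (d t : int) : 0 <= t < n%:Z -> ((d * n%:Z + t) %/ n%:Z)%Z = d.
Proof. by case/andP=> t_ge0 t_lt; rewrite divzMDl ?n_neq0 // divz_small ?addr0 // t_ge0. Qed.

Lemma modzMDl_small (d t : int) : 0 <= t < n%:Z -> ((d * n%:Z + t) %% n%:Z)%Z = t.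
Proof. by case/andP=> t_ge0 t_lt; rewrite modzMDl modz_small // t_ge0. Qed.

Lemma blockperm_intK q : cancel (blockperm_int q) (blockperm_int q^-1).
Proof.
move=> x; set j := perm_nat q (block_offset x).
have j_range : 0 <= j%:Z < n%:Z by rewrite ltz_nat perm_nat_lt ?block_offset_lt.
have y_sub1 : blockperm_int q x - 1 = ((x - 1) %/ n%:Z)%Z * n%:Z + j%:Z by rewrite addrK.
rewrite {1}/blockperm_int /block_offset y_sub1 divzMDl_small // modzMDl_small //.
by rewrite absz_nat perm_natK ?block_offset_lt // block_offsetE -divz_eq subrK.
Qed.

Lemma blockperm_int_shift q x i :
  blockperm_int q (x + i * n%:Z) = blockperm_int q x + (1 * i) * n%:Z.
Proof.
rewrite /blockperm_int /block_offset mul1r.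
have -> : x + i * n%:Z - 1 = i * n%:Z + (x - 1) by ring.
by rewrite divzMDl ?n_neq0 // modzMDl; ring.
Qed.

Lemma blockperm_posE q e : 1 <= e -> blockperm_pos q e = blockperm_int q e.
Proof.
move=> e_ge1; rewrite /blockperm_pos /blockperm_int /block_offset.
have -> : e - 1 = (`|e - 1|%N)%:Z by rewrite gez0_abs // subr_ge0.
by rewrite divz_nat modz_nat !absz_nat -/(perm_nat q _) -addn1 !PoszD PoszM.
Qed.

End BlockPermutation.

Theorem mainTheorem2 (n s : nat) (E : {fset int}) :
  (1 <= n)%N -> (1 <= s)%N ->
  E != fset0 ->
  (forall e, e \in E -> 1 <= e <= s%:Z) ->
  G2_equiv n (revE s E) E /\
  ((n %| s)%N -> forall p : {perm 'I_n}, G2_equiv n (blockpermE p E) E).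
Proof.
move=> n_gt0 _ _ E_range; split.
  pose r x : int := (s.+1)%:Z - x.
  have rK : cancel r r by move=> x; rewrite /r; ring.
  by apply: (G2_equiv_imfset (c := -1) _ rK rK) => [|x i]; rewrite /r; ring.
move=> _ p.
have -> : blockpermE p E = blockperm_int p @` E.
  by apply: eq_in_imfset => e /E_range /andP [e_ge1 _]; apply: blockperm_posE.
apply: (G2_equiv_imfset (c := 1) _ (blockperm_intK n_gt0 p) _ (mulr1 1)).
  by rewrite -{2}[p]invgK; apply: blockperm_intK.
exact: blockperm_int_shift.
Qed.
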